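(* Let $\mathbb{I}$ be a constraint graph (an $E$-graph) and $\mathbb{G}$ an $E$-group compatible with $\mathbb{I}$. If $\mathbb{G}$ is $N$-acyclic and free over $\mathbb{I}$, then $\mathbb{G}$ is $N$-acyclic over $\mathbb{I}$.
   Context: Let $E$ be a finite set. An $E$-group is a group $\mathbb{G}$ with $E\subseteq\mathbb{G}$ generating it, each $e\in E$ satisfying $e\neq1$, $e^2=1$; $[e_1\cdots e_n]_{\mathbb{G}}=e_1\cdots e_n$; $\mathbb{G}[\alpha]$ is the subgroup generated by $\alpha\subseteq E$. An $E$-graph is $(V,(R_e)_{e\in E})$ with each $R_e$ symmetric and each vertex having at most one $R_e$-neighbour; $\pi_e$ swaps $R_e$-neighbours and fixes other vertices, $\pi_{e_1\cdots e_n}=\pi_{e_n}\circ\cdots\circ\pi_{e_1}$. $\mathbb{G}$ is compatible with an $E$-graph if $[w]_{\mathbb{G}}=1$ implies $\pi_w=\mathrm{id}$. A coset cycle of length $n\ge2$ is $(g_i,\alpha_i)_{i\in\mathbb{Z}_n}$, $\alpha_i\subseteq E$, with $g_{i+1}\in g_i\mathbb{G}[\alpha_i]$ and $g_i\mathbb{G}[\alpha_i\cap\alpha_{i-1}]\cap g_{i+1}\mathbb{G}[\alpha_i\cap\alpha_{i+1}]=\emptyset$; $N$-acyclic means none of length $2,\dots,N$. Constraint graph $\mathbb{I}=(S,(R_e))$: for $\alpha\subseteq E$, $s,t\in S$, $\alpha^*[\mathbb{I},s]$ is the set of $w=e_1\cdots e_n\in\alpha^*$ labelling a walk in $\mathbb{I}$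 from $s$ (there are $s=s_0,\dots,s_n$ with $(s_{i-1},s_i)\in R_{e_i}$), $\alpha^*[\mathbb{I},s,t]$ those ending at $t$. $C[\mathbb{I},\alpha,s;g]:=\{g[w]_{\mathbb{G}}:w\in\alpha^*[\mathbb{I},s]\}$. An $\mathbb{I}$-coset cycle of length $n\ge2$ is $(g_i,\alpha_i,s_i)_{i\in\mathbb{Z}_n}$, $\alpha_i\subsetneq E$, $s_i\in S$, with $g_{i+1}=g_i[w]_{\mathbb{G}}$ for some $w\in\alpha_i^*[\mathbb{I},s_i,s_{i+1}]$ and $C[\mathbb{I},\alpha_i\cap\alpha_{i-1},s_i;g_i]\cap C[\mathbb{I},\alpha_i\cap\alpha_{i+1},s_{i+1};g_{i+1}]=\emptyset$; $\mathbb{G}$ is $N$-acyclic over $\mathbb{I}$ if there is none of length $2,\dots,N$. Freeness: for $g\in\mathbb{G}$, $\alpha\subseteq E$, $s\in S$, the map $h:C[\mathbb{I},\alpha,s;g]\to S$ sends $g[w]_{\mathbb{G}}$ ($w\in\alpha^*[\mathbb{I},s]$) to the endpoint of the walk from $s$ labelled $w$ (well defined by compatibility). $C[\mathbb{I},\alpha,s;g]$ is free if for all $g_1,g_2\in C[\mathbb{I},\alpha,s;g]$ and $\alpha_1,\alpha_2\subsetneq\alpha$: $g_1\mathbb{G}[\alpha_1]\cap g_2\mathbb{G}[\alpha_2]\neq\emptyset$ implies $C[\mathbb{I},\alpha_1,h(g_1);g_1]\cap C[\mathbb{I},\alpha_2,h(g_2);g_2]\neq\emptyset$. $\mathbb{G}$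 is free over $\mathbb{I}$ if all $C[\mathbb{I},\alpha,s;g]$ ($\alpha\subseteq E$, $s\in S$, $g\in\mathbb{G}$) are free. *)

From mathcomp Require Import all_boot.
Set Implicit Arguments.
Unset Strict Implicit.
Unset Printing Implicit Defensive.

Record group := Group {
  gT :> Type;
  gmul : gT -> gT -> gT;
  gone : gT;
  ginv : gT -> gT;
  gmulA : forall x y z, gmul x (gmul y z) = gmul (gmul x y) z;
  gmul1 : forall x, gmul gone x = x;
  gmulV : forall x, gmul (ginv x) x = gone }.

Section EGroups.
Variables (E : finType) (G : group) (emb : E -> G).

Definition eval (w : seq E) : G := foldr (fun e x => gmul (emb e) x) (gone G) w.

Definition is_subgroup (P : G -> Prop) :=
  P (gone G) /\ (forall x y, P x -> P y -> P (gmul x y)) /\ (forall x, P x -> P (ginv x)).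

Definition gen (A : {set E}) (x : G) : Prop :=
  forall P, is_subgroup P -> (forall e, e \in A -> P (emb e)) -> P x.

Definition is_Egroup : Prop :=
  injective emb /\ (forall e, emb e <> gone G) /\
  (forall e, gmul (emb e) (emb e) = gone G) /\ (forall x, gen setT x).

Definition in_coset (g : G) (A : {set E}) (x : G) : Prop :=
  exists y, gen A y /\ x = gmul g y.

(* coset cycle of length n, indexed by Z_n = 'I_n *)
Definition coset_cycle n (g : 'I_n -> G) (a : 'I_n -> {set E}) : Prop :=
  (forall i, in_coset (g i) (a i) (g (ordS i))) /\
  (forall i x, ~ (in_coset (g i) (a i :&: a (ord_pred i)) x /\
                  in_coset (g (ordS i)) (a i :&: a (ordS i)) x)).

Definition N_acyclic (N : nat) : Prop :=
  forall n, 2 <= n <= N -> forall g a, ~ @coset_cycle n g a.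

Variables (S : Type) (R : E -> S -> S -> Prop).

Definition is_Egraph : Prop :=
  forall e, (forall u v, R e u v -> R e v u) /\
            (forall v u u', R e v u -> R e v u' -> u = u').

Definition pi_step (e : E) (v u : S) : Prop :=
  R e v u \/ ((forall u', ~ R e v u') /\ u = v).

(* graph of pi_{e1...en} = pi_en o ... o pi_e1 *)
Fixpoint pi_word (w : seq E) (v u : S) : Prop :=
  match w with
  | [::] => u = v
  | e :: w' => exists v', pi_step e v v' /\ pi_word w' v' u
  end.

Definition compatible : Prop :=
  forall w, eval w = gone G -> forall v u, pi_word w v u <-> u = v.

Fixpoint walk (s : S) (w : seq E) (t : S) : Prop :=
  match w with
  | [::] => s = t
  | e :: w' => exists s', R e s s' /\ walk s' w' t
  end.

Definition word_in (A : {set E}) (w : seq E) : bool := all (fun e => e \in A) w.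

Definition inC (A : {set E}) (s : S) (g : G) (x : G) : Prop :=
  exists w t, word_in A w /\ walk s w t /\ x = gmul g (eval w).

(* C[I,A,s;g] is free; h(g[w]) is the endpoint of the walk from s labelled w *)
Definition C_free (A : {set E}) (s : S) (g : G) : Prop :=
  forall (w1 w2 : seq E) (t1 t2 : S) (A1 A2 : {set E}),
    word_in A w1 -> walk s w1 t1 -> word_in A w2 -> walk s w2 t2 ->
    A1 \proper A -> A2 \proper A ->
    (exists x, in_coset (gmul g (eval w1)) A1 x /\ in_coset (gmul g (eval w2)) A2 x) ->
    exists x, inC A1 t1 (gmul g (eval w1)) x /\ inC A2 t2 (gmul g (eval w2)) x.

Definition free_over : Prop := forall A s g, C_free A s g.

Definition I_coset_cycle n (g : 'I_n -> G) (a : 'I_n -> {set E}) (s : 'I_n -> S) : Prop :=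
  (forall i, a i \proper setT) /\
  (forall i, exists w, word_in (a i) w /\ walk (s i) w (s (ordS i)) /\
                       g (ordS i) = gmul (g i) (eval w)) /\
  (forall i x, ~ (inC (a i :&: a (ord_pred i)) (s i) (g i) x /\
                  inC (a i :&: a (ordS i)) (s (ordS i)) (g (ordS i)) x)).

Definition N_acyclic_over (N : nat) : Prop :=
  forall n, 2 <= n <= N -> forall g a s, ~ @I_coset_cycle n g a s.

End EGroups.

From mathcomp Require Import all_boot.
Set Implicit Arguments.
Unset Strict Implicit.
Unset Printing Implicit Defensive.

(* An I-coset cycle is a coset cycle once its walks are forgotten: the links
   are cosets of G[alpha_i], and disjointness of the cosets of
   G[alpha_i ∩ alpha_(i±1)] follows from that of the corresponding
   C-sets.  If alpha_i is contained in a neighbour, the relevant C-set is all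
   of C[I, alpha_i, s_i; g_i], which contains both g_i and g_(i+1) (the walk
   can be run backwards), so the C-sets would meet; otherwise both
   intersections are proper subsets of alpha_i and freeness of
   C[I, alpha_i, s_i; g_i] turns a common point of the cosets into a common
   point of the C-sets. *)

Section GroupFacts.
Variable G : group.

Lemma gmulrV (x : G) : gmul x (ginv x) = gone G.
Proof.
have -> : gmul x (ginv x) = gmul (gmul (ginv (ginv x)) (ginv x)) (gmul x (ginv x)).
  by rewrite gmulV gmul1.
by rewrite -gmulA [gmul (ginv x) (gmul x _)]gmulA gmulV gmul1 gmulV.
Qed.

Lemma gmulr1 (x : G) : gmul x (gone G) = x.
Proof. by rewrite -(gmulV x) gmulA gmulrV gmul1. Qed.

End GroupFacts.

Section Words.
Variables (E : finType) (G : group) (emb : E -> G).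

Lemma eval_cat (w v : seq E) : eval emb (w ++ v) = gmul (eval emb w) (eval emb v).
Proof. by elim: w => [|e w IH] /=; rewrite ?gmul1 // IH gmulA. Qed.

Lemma eval_mul_rev (w : seq E) : (forall e, gmul (emb e) (emb e) = gone G) ->
  gmul (eval emb w) (eval emb (rev w)) = gone G.
Proof.
move=> emb_invol; elim: w => [|e w IH] /=; first by rewrite gmul1.
rewrite rev_cons -cats1 eval_cat /= gmulr1 -gmulA [gmul (eval emb w) _]gmulA IH.
by rewrite gmul1 emb_invol.
Qed.

Lemma gen_eval (A : {set E}) (w : seq E) : word_in A w -> gen emb A (eval emb w).
Proof.
move=> wA P [P1 [PM _]] PA; elim: w wA => [|e w IH] //= /andP [eA wA].
by apply: PM; [apply: PA | apply: IH].
Qed.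

Lemma in_coset_eval (g : G) (A : {set E}) (w : seq E) :
  word_in A w -> in_coset emb g A (gmul g (eval emb w)).
Proof. by move=> wA; exists (eval emb w); split => //; apply: gen_eval. Qed.

End Words.

Section Walks.
Variables (E : finType) (S : Type) (R : E -> S -> S -> Prop).

Lemma walk_cat s w1 w2 t :
  walk R s (w1 ++ w2) t <-> exists m, walk R s w1 m /\ walk R m w2 t.
Proof.
elim: w1 s => [|e w1 IH] s /=; first by split=> [H|[m [-> H]]]; first exists s.
split=> [[s' [Rss' /(IH s') [m [H1 H2]]]] | [m [[s' [Rss' H1]] H2]]].
  by exists m; split => //; exists s'.
by exists s'; split => //; apply/IH; exists m.
Qed.

Lemma walk_rev s w t :
  (forall e u v, R e u v -> R e v u) -> walk R s w t -> walk R t (rev w) s.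
Proof.
move=> Rsym; elim: w s => [|e w IH] s /=; first by move=> ->.
move=> [s' [Rss' W]]; rewrite rev_cons -cats1; apply/walk_cat.
by exists s'; split; [apply: IH | exists s; split => //; apply: Rsym].
Qed.

End Walks.

Section CSets.
Variables (E : finType) (G : group) (emb : E -> G).
Variables (S : Type) (R : E -> S -> S -> Prop).

Lemma inC_self (A : {set E}) s (g : G) : inC emb R A s g g.
Proof. by exists [::], s; rewrite /= gmulr1. Qed.

Lemma inC_walk (A : {set E}) s t (g : G) w :
  word_in A w -> walk R s w t -> inC emb R A s g (gmul g (eval emb w)).
Proof. by exists w, t. Qed.

Lemma inC_walk_back (A : {set E}) s t (g : G) w :
  (forall e, gmul (emb e) (emb e) = gone G) ->
  (forall e u v, R e u v -> R e v u) ->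
  word_in A w -> walk R s w t -> inC emb R A t (gmul g (eval emb w)) g.
Proof.
move=> emb_invol Rsym wA W; exists (rev w), s; split; first by rewrite /word_in all_rev.
by split; [apply: walk_rev | rewrite -gmulA eval_mul_rev // gmulr1].
Qed.

Lemma properIr_of_not_subset (A B : {set E}) : ~~ (A \subset B) -> A :&: B \proper A.
Proof.
move=> AB; rewrite properEneq subsetIl andbT; apply: contra AB => /eqP <-.
exact: subsetIr.
Qed.

Lemma cosets_disjoint_of_inC_disjoint (A B1 B2 : {set E}) s t (g : G) w :
  (forall e, gmul (emb e) (emb e) = gone G) ->
  (forall e u v, R e u v -> R e v u) ->
  C_free emb R A s g -> word_in A w -> walk R s w t ->
  (forall x, ~ (inC emb R (A :&: B1) s g x /\
                inC emb R (A :&: B2) t (gmul g (eval emb w)) x)) ->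
  forall x, ~ (in_coset emb g (A :&: B1) x /\
               in_coset emb (gmul g (eval emb w)) (A :&: B2) x).
Proof.
move=> emb_invol Rsym Cfree wA W C_disj x cosets_meet.
have [AB1 | nAB1] := boolP (A \subset B1).
  apply: (C_disj (gmul g (eval emb w))); rewrite (setIidPl AB1).
  by split; [apply: inC_walk wA W | apply: inC_self].
have [AB2 | nAB2] := boolP (A \subset B2).
  apply: (C_disj g); rewrite (setIidPl AB2).
  by split; [apply: inC_self | exact: inC_walk_back emb_invol Rsym wA W].
have := Cfree [::] w s t _ _ isT erefl wA W
  (properIr_of_not_subset nAB1) (properIr_of_not_subset nAB2).
rewrite /= gmulr1 => free_link.
have [y [Cy1 Cy2]] := free_link (ex_intro _ x cosets_meet).
exact: (C_disj y).
Qed.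

End CSets.

Theorem mainTheorem9 (E : finType) (S : Type) (R : E -> S -> S -> Prop)
  (G : group) (emb : E -> G) (N : nat) :
  is_Egroup emb -> is_Egraph R -> compatible emb R ->
  N_acyclic emb N -> free_over emb R -> N_acyclic_over emb R N.
Proof.
move=> [_ [_ [emb_invol _]]] Egraph _ acyclic free n n_range g a s
  [_ [links C_disj]].
have Rsym : forall e u v, R e u v -> R e v u by move=> e; apply: (Egraph e).1.
apply: (acyclic n n_range g a); split=> [i | i].
  have [w [wA [_ ->]]] := links i; exact: in_coset_eval.
have [w [wA [W gS]]] := links i; rewrite gS.
apply: cosets_disjoint_of_inC_disjoint emb_invol Rsym (free _ _ _) wA W _.
by rewrite -gS; apply: C_disj.
Qed.
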